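(* Let $\kappa\in\mathbb{K}$, let $(\mathfrak{g},[-,-,-]_\mathfrak{g},\alpha_\mathfrak{g})$ and $(\mathfrak{h},[-,-,-]_\mathfrak{h},\alpha_\mathfrak{h})$ be regular Hom-Lie triple systems (i.e. $\alpha_\mathfrak{g},\alpha_\mathfrak{h}$ are bijective), $\theta$ an action of $\mathfrak{g}$ on $\mathfrak{h}$, and $\mathcal{A}:\mathfrak{h}\to\mathfrak{g}$ a $\kappa$-weighted $\mathcal{O}$-operator with respect to $\theta$. Let $a,b\in\mathfrak{g}$ satisfy $\alpha_\mathfrak{g}(a)=a$, $\alpha_\mathfrak{g}(b)=b$, and define $\Im(a,b):\mathfrak{h}\to\mathfrak{g}$ by $$\Im(a,b)v=\mathcal{A}\big(D(a,b)\alpha_\mathfrak{h}^{-1}(v)\big)-[a,b,\mathcal{A}\alpha_\mathfrak{h}^{-1}(v)]_\mathfrak{g}.$$ Then $\Im(a,b)$ is a 1-cocycle of the Hom-Lie triple system $(\mathfrak{h},\{-,-,-\}_\mathcal{A},\alpha_\mathfrak{h})$ with coefficients in $(\mathfrak{g},\alpha_\mathfrak{g};\theta_\mathcal{A})$; that is, $\alpha_\mathfrak{g}\circ\Im(a,b)=\Im(a,b)\circ\alpha_\mathfrak{h}$ and for all $v_1,v_2,v_3\in\mathfrak{h}$, $$\theta_\mathcal{A}(v_2,v_3)\Im(a,b)v_1-\theta_\mathcal{A}(v_1,v_3)\Im(a,b)v_2+D_\mathcal{A}(v_1,v_2)\Im(a,b)v_3-\Im(a,b)\{v_1,v_2,v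_3\}_\mathcal{A}=0.$$
   Context: All vector spaces are over a field $\mathbb{K}$ of characteristic zero. A Hom-Lie triple system $(\mathfrak{g},[-,-,-]_\mathfrak{g},\alpha_\mathfrak{g})$ is a vector space with a trilinear map $[-,-,-]_\mathfrak{g}$ and a linear map $\alpha_\mathfrak{g}$ with $\alpha_\mathfrak{g}([x,y,z]_\mathfrak{g})=[\alpha_\mathfrak{g}(x),\alpha_\mathfrak{g}(y),\alpha_\mathfrak{g}(z)]_\mathfrak{g}$ such that for all $x,y,z,a,b$: $[x,y,z]_\mathfrak{g}+[y,x,z]_\mathfrak{g}=0$; $[x,y,z]_\mathfrak{g}+[z,x,y]_\mathfrak{g}+[y,z,x]_\mathfrak{g}=0$; $[\alpha_\mathfrak{g}(a),\alpha_\mathfrak{g}(b),[x,y,z]_\mathfrak{g}]_\mathfrak{g}=[[a,b,x]_\mathfrak{g},\alpha_\mathfrak{g}(y),\alpha_\mathfrak{g}(z)]_\mathfrak{g}+[\alpha_\mathfrak{g}(x),[a,b,y]_\mathfrak{g},\alpha_\mathfrak{g}(z)]_\mathfrak{g}+[\alpha_\mathfrak{g}(x),\alpha_\mathfrak{g}(y),[a,b,z]_\mathfrak{g}]_\mathfrak{g}$. A representation of $\mathfrak{g}$ on $(V,\beta)$ is a bilinear map $\theta:\mathfrak{g}\times\mathfrak{g}\to\mathrm{End}(V)$ such that, with $D(x,y)=\theta(y,x)-\theta(x,y)$, for all $x,y,a,b$: $\theta(\alpha_\mathfrak{g}(x),\alpha_\mathfrak{g}(y))\circ\beta=\beta\circ\theta(x,y)$;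 $\theta(\alpha_\mathfrak{g}(a),\alpha_\mathfrak{g}(b))\theta(x,y)-\theta(\alpha_\mathfrak{g}(y),\alpha_\mathfrak{g}(b))\theta(x,a)-\theta(\alpha_\mathfrak{g}(x),[y,a,b]_\mathfrak{g})\circ\beta+D(\alpha_\mathfrak{g}(y),\alpha_\mathfrak{g}(a))\theta(x,b)=0$; $\theta(\alpha_\mathfrak{g}(a),\alpha_\mathfrak{g}(b))D(x,y)-D(\alpha_\mathfrak{g}(x),\alpha_\mathfrak{g}(y))\theta(a,b)+\theta([x,y,a]_\mathfrak{g},\alpha_\mathfrak{g}(b))\circ\beta+\theta(\alpha_\mathfrak{g}(a),[x,y,b]_\mathfrak{g})\circ\beta=0$. An action of $\mathfrak{g}$ on a Hom-Lie triple system $(\mathfrak{h},[-,-,-]_\mathfrak{h},\alpha_\mathfrak{h})$ is a representation $\theta$ of $\mathfrak{g}$ on $(\mathfrak{h},\alpha_\mathfrak{h})$ such that for all $x,y\in\mathfrak{g}$, $u,v,w\in\mathfrak{h}$: $\theta(\alpha_\mathfrak{g}(x),\alpha_\mathfrak{g}(y))[u,v,w]_\mathfrak{h}=[\theta(x,y)u,\alpha_\mathfrak{h}(v),\alpha_\mathfrak{h}(w)]_\mathfrak{h}+[\alpha_\mathfrak{h}(u),\theta(x,y)v,\alpha_\mathfrak{h}(w)]_\mathfrak{h}+[\alpha_\mathfrak{h}(u),\alpha_\mathfrak{h}(v),\theta(x,y)w]_\mathfrak{h}$ and $\theta(\alpha_\mathfrak{g}(x),\alpha_\mathfrak{g}(y))[u,v,w]_\mathfrak{h}=[\alpha_\mathfrak{h}(u),\alpha_\mathfrak{h}(v),\theta(x,y)w]_\mathfrak{h}=0$.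 A $\kappa$-weighted $\mathcal{O}$-operator from $\mathfrak{h}$ to $\mathfrak{g}$ with respect to $\theta$ is a linear map $\mathcal{A}:\mathfrak{h}\to\mathfrak{g}$ with $\mathcal{A}\circ\alpha_\mathfrak{h}=\alpha_\mathfrak{g}\circ\mathcal{A}$ and $[\mathcal{A}u,\mathcal{A}v,\mathcal{A}w]_\mathfrak{g}=\mathcal{A}\big(D(\mathcal{A}u,\mathcal{A}v)w-\theta(\mathcal{A}u,\mathcal{A}w)v+\theta(\mathcal{A}v,\mathcal{A}w)u+\kappa[u,v,w]_\mathfrak{h}\big)$. For such $\mathcal{A}$: $\{u,v,w\}_\mathcal{A}=D(\mathcal{A}u,\mathcal{A}v)w-\theta(\mathcal{A}u,\mathcal{A}w)v+\theta(\mathcal{A}v,\mathcal{A}w)u+\kappa[u,v,w]_\mathfrak{h}$ makes $(\mathfrak{h},\{-,-,-\}_\mathcal{A},\alpha_\mathfrak{h})$ a Hom-Lie triple system; $\theta_\mathcal{A}(u,v)(x)=[x,\mathcal{A}u,\mathcal{A}v]_\mathfrak{g}+\mathcal{A}(\theta(x,\mathcal{A}v)u-D(x,\mathcal{A}u)v)$ for $u,v\in\mathfrak{h}$, $x\in\mathfrak{g}$ defines a representation of it on $(\mathfrak{g},\alpha_\mathfrak{g})$, and $D_\mathcal{A}(u,v)=\theta_\mathcal{A}(v,u)-\theta_\mathcal{A}(u,v)$. *)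

From HB Require Import structures.
From mathcomp Require Import all_boot all_order all_algebra.
Set Implicit Arguments. Unset Strict Implicit. Unset Printing Implicit Defensive.
Import GRing.Theory.
Local Open Scope ring_scope.

Section HomLTS.
Variable K : fieldType.

Definition lin (U V : lmodType K) (f : U -> V) : Prop :=
  forall (c : K) (u v : U), f (c *: u + v) = c *: f u + f v.

Definition trilinear (V : lmodType K) (br : V -> V -> V -> V) : Prop :=
  (forall y z, lin (fun x => br x y z)) /\
  (forall x z, lin (fun y => br x y z)) /\
  (forall x y, lin (fun z => br x y z)).

Definition HomLTS (V : lmodType K) (br : V -> V -> V -> V) (al : V -> V) : Prop :=
  trilinear br /\ lin al /\
      (forall x y z, al (br x y z) = br (al x) (al y) (al z)) /\
      (forall x y z, br x y z + br y x z = 0) /\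
      (forall x y z, br x y z + br z x y + br y z x = 0) /\
      (forall a b x y z,
          br (al a) (al b) (br x y z) =
          br (br a b x) (al y) (al z) + br (al x) (br a b y) (al z)
          + br (al x) (al y) (br a b z)).

Definition Dop (G V : lmodType K) (th : G -> G -> V -> V) (x y : G) : V -> V :=
  fun v => th y x v - th x y v.

Definition HomLTS_rep (G V : lmodType K) (brg : G -> G -> G -> G) (alg : G -> G)
    (beta : V -> V) (th : G -> G -> V -> V) : Prop :=
  (forall x y, lin (th x y)) /\
      (forall y v, lin (fun x => th x y v)) /\
      (forall x v, lin (fun y => th x y v)) /\
      (forall x y v, th (alg x) (alg y) (beta v) = beta (th x y v)) /\
      (forall a b x y v,
          th (alg a) (alg b) (th x y v) - th (alg y) (alg b) (th x a v)
          - th (alg x) (brg y a b) (beta v) + Dop th (alg y) (alg a) (th x b v) = 0) /\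
      (forall a b x y v,
          th (alg a) (alg b) (Dop th x y v) - Dop th (alg x) (alg y) (th a b v)
          + th (brg x y a) (alg b) (beta v) + th (alg a) (brg x y b) (beta v) = 0).

Definition HomLTS_action (G H : lmodType K) (brg : G -> G -> G -> G) (alg : G -> G)
    (brh : H -> H -> H -> H) (alh : H -> H) (th : G -> G -> H -> H) : Prop :=
  [/\ HomLTS_rep brg alg alh th,
      (forall x y u v w,
          th (alg x) (alg y) (brh u v w) =
          brh (th x y u) (alh v) (alh w) + brh (alh u) (th x y v) (alh w)
          + brh (alh u) (alh v) (th x y w)) &
      (forall x y u v w,
          th (alg x) (alg y) (brh u v w) = brh (alh u) (alh v) (th x y w) /\
          brh (alh u) (alh v) (th x y w) = 0)].

Definition bracketA (G H : lmodType K) (brh : H -> H -> H -> H)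
    (th : G -> G -> H -> H) (A : H -> G) (k : K) (u v w : H) : H :=
  Dop th (A u) (A v) w - th (A u) (A w) v + th (A v) (A w) u + k *: brh u v w.

Definition OOperator (G H : lmodType K) (brg : G -> G -> G -> G) (alg : G -> G)
    (brh : H -> H -> H -> H) (alh : H -> H) (th : G -> G -> H -> H)
    (k : K) (A : H -> G) : Prop :=
  [/\ lin A,
      (forall u, A (alh u) = alg (A u)) &
      (forall u v w, brg (A u) (A v) (A w) = A (bracketA brh th A k u v w))].

Definition thetaA (G H : lmodType K) (brg : G -> G -> G -> G)
    (th : G -> G -> H -> H) (A : H -> G) (u v : H) (x : G) : G :=
  brg x (A u) (A v) + A (th x (A v) u - Dop th x (A u) v).

Definition DA (G H : lmodType K) (brg : G -> G -> G -> G)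
    (th : G -> G -> H -> H) (A : H -> G) (u v : H) (x : G) : G :=
  thetaA brg th A v u x - thetaA brg th A u v x.

Definition ImAB (G H : lmodType K) (brg : G -> G -> G -> G)
    (th : G -> G -> H -> H) (A : H -> G) (alhinv : H -> H) (a b : G) (v : H) : G :=
  A (Dop th a b (alhinv v)) - brg a b (A (alhinv v)).

End HomLTS.

From mathcomp Require Import all_boot all_order all_algebra.
Set Implicit Arguments. Unset Strict Implicit. Unset Printing Implicit Defensive.
Import GRing.Theory.
Local Open Scope ring_scope.

(* On g x h, the weight-k semidirect product bracket
     [(x,u), (y,v), (z,w)] = ([x,y,z], D(x,y)w - theta(x,z)v + theta(y,z)u + k[u,v,w])
   is skew-symmetric and satisfies the cyclic identity, and the O-operator
   identity says exactly that the graph {(A u, u)} of A is closed under it, the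
   induced bracket on the graph being {-,-,-}_A.  Identify the quotient of g x h
   by the graph with g through (x,u) |-> A u - x: bracketing with two elements of
   the graph then becomes theta_A (and, by skew-symmetry and the cyclic identity,
   -theta_A and D_A in the other two slots).  Because alpha(a) = a and
   alpha(b) = b, the inner map [(a,0), (b,0), -] = ([a,b,-], D(a,b)) is an
   alpha-twisted derivation of the semidirect product, so its restriction to the
   graph, projected to the quotient, is a 1-cocycle; precomposed with alpha_h
   this projection is exactly Im(a,b). *)

Section Linear.
Variables (K : fieldType) (U V : lmodType K) (f : U -> V).
Hypothesis f_lin : lin f.

Lemma linD u v : f (u + v) = f u + f v.
Proof. by have := f_lin 1 u v; rewrite !scale1r. Qed.

Lemma lin0 : f 0 = 0.
Proof. by apply: (addrI (f 0)); rewrite -linD !addr0. Qed.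

Lemma linZ c u : f (c *: u) = c *: f u.
Proof. by have := f_lin c u 0; rewrite !addr0 lin0 addr0. Qed.

Lemma linN u : f (- u) = - f u.
Proof. by rewrite -scaleN1r linZ scaleN1r. Qed.

End Linear.

Lemma addr_pull (V : zmodType) (x y r r' : V) : r = y + r' -> x + r = y + (x + r').
Proof. by move=> ->; rewrite addrCA. Qed.

Lemma addr_cancel (V : zmodType) (x r r' : V) : r = - x + r' -> r' = 0 -> x + r = 0.
Proof. by move=> -> ->; rewrite addr0 addrN. Qed.

Lemma addr_cancelN (V : zmodType) (x r r' : V) : r = x + r' -> r' = 0 -> - x + r = 0.
Proof. by move=> -> ->; rewrite addr0 addNr. Qed.

Ltac pull_summand t :=
  lazymatch goal with
  | |- ?s + ?r = _ => first [unify s t; reflexivity | eapply addr_pull; pull_summand t]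
  end.

Ltac cancel_summands :=
  lazymatch goal with
  | |- 0 = 0 => reflexivity
  | |- - ?x + _ = 0 => eapply addr_cancelN; [pull_summand x | cancel_summands]
  | |- ?x + _ = 0 => eapply addr_cancel; [pull_summand (- x) | cancel_summands]
  end.

(* Closes an identity of a left module whose two sides agree up to reordering and
   cancellation of opposite summands. *)
Ltac lmod_cancel :=
  apply/eqP; rewrite -subr_eq0; apply/eqP;
  rewrite ?scalerDr ?scalerN ?opprD ?opprK -[LHS]addr0 -?addrA; cancel_summands.

Section SemidirectProduct.
Variables (K : fieldType) (G H : lmodType K).
Variables (brg : G -> G -> G -> G) (alg : G -> G).
Variables (brh : H -> H -> H -> H) (alh : H -> H).
Variables (th : G -> G -> H -> H) (k : K) (A : H -> G) (a b : G).

Hypotheses (brg_tri : trilinear brg) (brh_tri : trilinear brh).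
Hypotheses (alg_lin : lin alg) (alh_lin : lin alh) (A_lin : lin A).
Hypothesis th_lin1 : forall y v, lin (fun x => th x y v).
Hypothesis th_lin2 : forall x v, lin (fun y => th x y v).
Hypothesis th_lin3 : forall x y, lin (th x y).

Lemma Dop_lin x y : lin (Dop th x y).
Proof.
move=> c u v.
by rewrite /Dop !(linD (th_lin3 _ _)) !(linZ (th_lin3 _ _)) scalerBr; lmod_cancel.
Qed.

Let linE :=
  (linD A_lin, linN A_lin, linZ A_lin, linD alg_lin, linN alg_lin,
   linD alh_lin, linN alh_lin, linZ alh_lin,
   (fun y v => linD (th_lin1 y v), fun y v => linN (th_lin1 y v),
    fun x v => linD (th_lin2 x v), fun x v => linN (th_lin2 x v),
    fun x y => linD (th_lin3 x y), fun x y => linN (th_lin3 x y),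
    fun x y => linZ (th_lin3 x y)),
   (fun x y => linD (Dop_lin x y), fun x y => linN (Dop_lin x y),
    fun x y => linZ (Dop_lin x y)),
   (fun y z => linD (brg_tri.1 y z), fun y z => linN (brg_tri.1 y z),
    fun x z => linD (brg_tri.2.1 x z), fun x z => linN (brg_tri.2.1 x z),
    fun x y => linD (brg_tri.2.2 x y), fun x y => linN (brg_tri.2.2 x y)),
   (fun y z => linD (brh_tri.1 y z), fun y z => linN (brh_tri.1 y z),
    fun x z => linD (brh_tri.2.1 x z), fun x z => linN (brh_tri.2.1 x z),
    fun x y => linD (brh_tri.2.2 x y), fun x y => linN (brh_tri.2.2 x y))).

Definition semidirect_br (p q r : G * H) : G * H :=
  (brg p.1 q.1 r.1,
   Dop th p.1 q.1 r.2 - th p.1 r.1 q.2 + th q.1 r.1 p.2 + k *: brh p.2 q.2 r.2).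

Definition graphA (u : H) : G * H := (A u, u).

Definition quotA (p : G * H) : G := A p.2 - p.1.

Hypothesis brg_skew : forall x y z, brg x y z + brg y x z = 0.
Hypothesis brh_skew : forall u v w, brh u v w + brh v u w = 0.

Lemma semidirect_br_skew p q r : semidirect_br q p r = - semidirect_br p q r.
Proof.
case: p q r => [x u] [y v] [z w].
apply: injective_projections => /=; first exact/esym/addr0_eq/brg_skew.
rewrite -(addr0_eq (brh_skew u v w)) /Dop; lmod_cancel.
Qed.

Hypothesis brg_cyclic : forall x y z, brg x y z + brg z x y + brg y z x = 0.
Hypothesis brh_cyclic : forall u v w, brh u v w + brh w u v + brh v w u = 0.

Lemma semidirect_br_cyclic p q r :
  semidirect_br p q r + semidirect_br r p q + semidirect_br q r p = 0.
Proof.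
case: p q r => [x u] [y v] [z w].
apply: injective_projections => /=; first exact: brg_cyclic.
rewrite -[RHS](scaler0 _ k) -(brh_cyclic u v w) /Dop; lmod_cancel.
Qed.

Hypothesis A_bracket :
  forall u v w, brg (A u) (A v) (A w) = A (bracketA brh th A k u v w).

Lemma semidirect_br_graph u v w :
  semidirect_br (graphA u) (graphA v) (graphA w) = graphA (bracketA brh th A k u v w).
Proof. by rewrite /semidirect_br /graphA /= A_bracket. Qed.

Lemma quotAD p q : quotA (p + q) = quotA p + quotA q.
Proof. by rewrite /quotA /= linE; lmod_cancel. Qed.

Lemma quotAN p : quotA (- p) = - quotA p.
Proof. by rewrite /quotA /= linE; lmod_cancel. Qed.

Lemma quotA_br_graph p u v :
  quotA (semidirect_br p (graphA u) (graphA v)) = thetaA brg th A u v (quotA p).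
Proof.
case: p => x w; rewrite /quotA /semidirect_br /thetaA /Dop /=.
by rewrite !linE A_bracket /bracketA /Dop !linE; lmod_cancel.
Qed.

Lemma quotA_br_graph_mid p u v :
  quotA (semidirect_br (graphA u) p (graphA v)) = - thetaA brg th A u v (quotA p).
Proof. by rewrite semidirect_br_skew quotAN quotA_br_graph. Qed.

Lemma quotA_br_graph_last p u v :
  quotA (semidirect_br (graphA u) (graphA v) p) = DA brg th A u v (quotA p).
Proof.
rewrite -(addr0_eq (semidirect_br_cyclic p (graphA u) (graphA v))).
by rewrite quotAN quotAD quotA_br_graph quotA_br_graph_mid /DA; lmod_cancel.
Qed.

Definition inner_der (p : G * H) : G * H := (brg a b p.1, Dop th a b p.2).

Definition alpha_sd (p : G * H) : G * H := (alg p.1, alh p.2).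

Hypotheses (alg_a : alg a = a) (alg_b : alg b = b).
Hypothesis brg_fund : forall c d x y z,
  brg (alg c) (alg d) (brg x y z) =
  brg (brg c d x) (alg y) (alg z) + brg (alg x) (brg c d y) (alg z)
  + brg (alg x) (alg y) (brg c d z).
Hypothesis th_rep2 : forall c d x y v,
  th (alg c) (alg d) (Dop th x y v) - Dop th (alg x) (alg y) (th c d v)
  + th (brg x y c) (alg d) (alh v) + th (alg c) (brg x y d) (alh v) = 0.
Hypothesis th_der : forall x y u v w,
  th (alg x) (alg y) (brh u v w) =
  brh (th x y u) (alh v) (alh w) + brh (alh u) (th x y v) (alh w)
  + brh (alh u) (alh v) (th x y w).

Lemma Dop_th_der y z u :
  Dop th a b (th y z u) =
  th (alg y) (alg z) (Dop th a b u) + th (brg a b y) (alg z) (alh u)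
  + th (alg y) (brg a b z) (alh u).
Proof. by rewrite -[LHS]addr0 -(th_rep2 y z a b u) alg_a alg_b; lmod_cancel. Qed.

Lemma Dop_brh_der u v w :
  Dop th a b (brh u v w) =
  brh (Dop th a b u) (alh v) (alh w) + brh (alh u) (Dop th a b v) (alh w)
  + brh (alh u) (alh v) (Dop th a b w).
Proof.
by rewrite /Dop -[in LHS]alg_a -[in LHS]alg_b !th_der !linE; lmod_cancel.
Qed.

Lemma inner_der_br p q r :
  inner_der (semidirect_br p q r) =
  semidirect_br (inner_der p) (alpha_sd q) (alpha_sd r)
  + semidirect_br (alpha_sd p) (inner_der q) (alpha_sd r)
  + semidirect_br (alpha_sd p) (alpha_sd q) (inner_der r).
Proof.
case: p q r => [x u] [y v] [z w]; apply: injective_projections => /=.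
  by rewrite -[in LHS]alg_a -[in LHS]alg_b brg_fund.
by rewrite !linE !Dop_th_der Dop_brh_der /Dop !linE; lmod_cancel.
Qed.

Hypothesis alg_brg : forall x y z, alg (brg x y z) = brg (alg x) (alg y) (alg z).
Hypothesis th_alpha : forall x y v, th (alg x) (alg y) (alh v) = alh (th x y v).

Lemma inner_der_alpha p : inner_der (alpha_sd p) = alpha_sd (inner_der p).
Proof.
case: p => x u; rewrite /inner_der /alpha_sd /=; congr (_, _).
  by rewrite alg_brg alg_a alg_b.
by rewrite /Dop !linE -!th_alpha alg_a alg_b.
Qed.

Hypothesis A_alpha : forall u, A (alh u) = alg (A u).

Lemma alpha_graph u : alpha_sd (graphA u) = graphA (alh u).
Proof. by rewrite /alpha_sd /graphA /= A_alpha. Qed.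

Lemma quotA_alpha p : quotA (alpha_sd p) = alg (quotA p).
Proof. by rewrite /quotA /= A_alpha !linE. Qed.

Hypothesis alh_brh : forall u v w, alh (brh u v w) = brh (alh u) (alh v) (alh w).

Lemma bracketA_alh u v w :
  bracketA brh th A k (alh u) (alh v) (alh w) = alh (bracketA brh th A k u v w).
Proof. by rewrite /bracketA /Dop !linE !A_alpha !th_alpha alh_brh. Qed.

Variable alhinv : H -> H.
Hypotheses (alhK : cancel alh alhinv) (alhinvK : cancel alhinv alh).

Lemma ImAB_alh u : ImAB brg th A alhinv a b (alh u) = quotA (inner_der (graphA u)).
Proof. by rewrite /ImAB alhK. Qed.

Lemma ImAB_alpha v : alg (ImAB brg th A alhinv a b v) = ImAB brg th A alhinv a b (alh v).
Proof.
by rewrite -(alhinvK v) !ImAB_alh -quotA_alpha -inner_der_alpha alpha_graph.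
Qed.

Lemma ImAB_cocycle v1 v2 v3 :
  thetaA brg th A v2 v3 (ImAB brg th A alhinv a b v1)
  - thetaA brg th A v1 v3 (ImAB brg th A alhinv a b v2)
  + DA brg th A v1 v2 (ImAB brg th A alhinv a b v3)
  - ImAB brg th A alhinv a b (bracketA brh th A k v1 v2 v3) = 0.
Proof.
rewrite -(alhinvK v1) -(alhinvK v2) -(alhinvK v3) bracketA_alh !ImAB_alh.
rewrite -semidirect_br_graph inner_der_br !alpha_graph !quotAD.
by rewrite quotA_br_graph quotA_br_graph_mid quotA_br_graph_last subrr.
Qed.

End SemidirectProduct.

Theorem mainTheorem5 (K : fieldType) (charK0 : [pchar K] =i pred0)
    (G H : lmodType K)
    (brg : G -> G -> G -> G) (alg : G -> G)
    (brh : H -> H -> H -> H) (alh : H -> H) (alhinv : H -> H)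
    (th : G -> G -> H -> H) (k : K) (A : H -> G) (a b : G) :
  HomLTS brg alg -> bijective alg ->
  HomLTS brh alh -> cancel alh alhinv -> cancel alhinv alh ->
  HomLTS_action brg alg brh alh th ->
  OOperator brg alg brh alh th k A ->
  alg a = a -> alg b = b ->
  (forall v, alg (ImAB brg th A alhinv a b v) = ImAB brg th A alhinv a b (alh v)) /\
  (forall v1 v2 v3,
     thetaA brg th A v2 v3 (ImAB brg th A alhinv a b v1)
     - thetaA brg th A v1 v3 (ImAB brg th A alhinv a b v2)
     + DA brg th A v1 v2 (ImAB brg th A alhinv a b v3)
     - ImAB brg th A alhinv a b (bracketA brh th A k v1 v2 v3) = 0).
Proof.
move=> [brg_tri [alg_lin [alg_brg [brg_skew [brg_cyclic brg_fund]]]]] _.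
move=> [brh_tri [alh_lin [alh_brh [brh_skew [brh_cyclic _]]]]] alhK alhinvK.
move=> [[th_lin3 [th_lin1 [th_lin2 [th_alpha [_ th_rep2]]]]] th_der _].
move=> [A_lin A_alpha A_bracket] alg_a alg_b.
by split; [exact: ImAB_alpha | exact: (ImAB_cocycle (alg := alg) (alh := alh))].
Qed.
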